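(* Fix $n\in\mathbb{N}$. Consider a random problem instance, i.e. a random variable whose value determines a target set $T\subseteq\mathbb{F}_2^n$ (with $\mathbb{F}_2=\{0,1\}$), assumed nonempty. For each instance let $C=\sum_{z\in T}|z\rangle\langle z|$, $X=\sum_{j=1}^n\sigma^x_j$, $|\beta,\gamma\rangle_1=e^{-i\beta X}e^{-i\gamma C}|+\rangle^{\otimes n}$ and $F_1(\beta,\gamma)=\langle\beta,\gamma|_1C|\beta,\gamma\rangle_1$. For $k\in T$ and $0\le d\le n$ let $\#_d(k)=|\{z\in T:d_H(z,k)=d\}|$ ($d_H$ the Hamming distance), $f_n(\beta,d)=(\cos\beta)^{n-d}(-i\sin\beta)^d$, and $$c_k(\beta,\gamma)=\sum_{d=0}^n\left(\#_d(k)(e^{-i\gamma}-1)+\binom{n}{d}\right)f_n(\beta,d).$$ For a function $g$ of $k$, write $\overline{g(k)}=\frac{1}{|T|}\sum_{k\in T}g(k)$ (an instance-dependent random variable). Define $$\tilde E(F_1(\beta,\gamma))=\frac{E(|T|)}{2^n}\,E\!\left(\overline{|c_k(\beta,\gamma)|^2}\right).$$ Then $$E\!\left(\overline{|c_k(\beta,\gamma)|^2}\right)=\sum_{d_1,d_2=0}^n w_{d_1,d_2}(\gamma)\,f_n(\beta,d_1)\,f_n(\beta,d_2)^*,$$ where $$\begin{aligned}w_{d_1,d_2}(\gamma)=\;&E\!\left(\overline{\#_{d_1}(k)\#_{d_2}(k)}\right)(e^{-i\gamma}-1)(e^{i\gamma}-1)+E\!\left(\overline{\#_{d_1}(k)}\right)(e^{-i\gamma}-1)\binom{n}{d_2}\\&+E\!\left(\overline{\#_{d_2}(k)}\right)(e^{i\gamma}-1)\binom{n}{d_1}+\binom{n}{d_1}\binom{n}{d_2},\end{aligned}$$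 and the approximation error satisfies $$\left|E(F_1(\beta,\gamma))-\tilde E(F_1(\beta,\gamma))\right|\le\sqrt{\operatorname{Var}(|T|)\,\operatorname{Var}\!\left(\overline{|c_k(\beta,\gamma)|^2}\right)}.$$
   Context: Expectations $E$, variances $\operatorname{Var}$ are taken over the random instance (hence over the random target set $T$). $|z\rangle$ denotes the computational basis state of $z\in\mathbb{F}_2^n$, $|+\rangle=(|0\rangle+|1\rangle)/\sqrt2$, $\sigma^x_j$ is Pauli-$X$ on qubit $j$, and ${}^*$ denotes complex conjugation. *)

From mathcomp Require Import all_boot all_order all_algebra.
From mathcomp.real_closed Require Import complex.
From mathcomp Require Import all_classical all_reals all_analysis.
Import Order.TTheory GRing.Theory Num.Theory.
Import numFieldNormedType.Exports.

Set Implicit Arguments.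
Unset Strict Implicit.
Unset Printing Implicit Defensive.

Local Open Scope ring_scope.

Section QAOA.
Variable R : realType.
Local Notation C := R[i].

Definition expi (t : R) : C := Complex (cos t) (sin t).

Definition expm_partial (m : nat) (A : 'M[C]_m) (N : nat) : 'M[C]_m :=
  \sum_(k < N) ((k`!)%:R)^-1 *: A ^+ k.

Definition expm (m : nat) (A : 'M[C]_m) : 'M[C]_m :=
  \matrix_(a, b) Complex (limn (fun N => complex.Re (expm_partial A N a b)))
                         (limn (fun N => complex.Im (expm_partial A N a b))).

Variable n : nat.

Definition bitstr := {ffun 'I_n -> bool}.

(* Computational basis index a < 2^n  <->  bit string (binary digits of a). *)
Definition bits (a : 'I_(2 ^ n)) : bitstr := [ffun j : 'I_n => odd (a %/ 2 ^ j)].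

Definition flip (j : 'I_n) (z : bitstr) : bitstr :=
  [ffun i => if i == j then ~~ z i else z i].

Definition sigma_x (j : 'I_n) : 'M[C]_(2 ^ n) :=
  \matrix_(a, b) (bits a == flip j (bits b))%:R.

Definition Xmix : 'M[C]_(2 ^ n) := \sum_(j < n) sigma_x j.

Definition Ccost (T : {set bitstr}) : 'M[C]_(2 ^ n) :=
  \matrix_(a, b) ((a == b) && (bits a \in T))%:R.

Definition plus_state : 'cV[C]_(2 ^ n) := \col_a ((sqrtC 2)^-1 ^+ n).

Definition psi1 (T : {set bitstr}) (beta gamma : R) : 'cV[C]_(2 ^ n) :=
  expm ((- 'i%C * beta%:C%C) *: Xmix) *m
  expm ((- 'i%C * gamma%:C%C) *: Ccost T) *m plus_state.

Definition F1 (T : {set bitstr}) (beta gamma : R) : C :=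
  ((map_mx conjc (psi1 T beta gamma))^T *m Ccost T *m psi1 T beta gamma) 0 0.

Definition hamming (z k : bitstr) : nat := #|[set j | z j != k j]|.

Definition cnt (T : {set bitstr}) (d : nat) (k : bitstr) : nat :=
  #|[set z in T | hamming z k == d]|.

Definition fn (beta : R) (d : nat) : C :=
  (cos beta)%:C%C ^+ (n - d) * (- 'i%C * (sin beta)%:C%C) ^+ d.

Definition ck (T : {set bitstr}) (beta gamma : R) (k : bitstr) : C :=
  \sum_(d < n.+1)
     (((cnt T d k)%:R * (expi (- gamma) - 1) + ('C(n, d))%:R) * fn beta d).

Definition kavg (T : {set bitstr}) (g : bitstr -> C) : C :=
  (#|T|%:R)^-1 * \sum_(k in T) g k.

(* A random instance is modelled by a finite probability space (Omega, P)
   and a map T : Omega -> {set bitstr}. *)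

Definition Ex (Omega : finType) (P : Omega -> R) (Y : Omega -> C) : C :=
  \sum_(w : Omega) (P w)%:C%C * Y w.

Definition Var (Omega : finType) (P : Omega -> R) (Y : Omega -> C) : C :=
  Ex P (fun w => (Y w - Ex P Y) ^+ 2).

Definition avg_ck2 (Omega : finType) (T : Omega -> {set bitstr}) (beta gamma : R)
  (w : Omega) : C :=
  kavg (T w) (fun k => `|ck (T w) beta gamma k| ^+ 2).

Definition EtildeF1 (Omega : finType) (P : Omega -> R) (T : Omega -> {set bitstr})
  (beta gamma : R) : C :=
  Ex P (fun w => (#|T w|)%:R) / (2 ^ n)%:R * Ex P (avg_ck2 T beta gamma).

Definition wcoef (Omega : finType) (P : Omega -> R) (T : Omega -> {set bitstr})
  (gamma : R) (d1 d2 : nat) : C :=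
  Ex P (fun w => kavg (T w) (fun k => ((cnt (T w) d1 k) * (cnt (T w) d2 k))%:R))
     * (expi (- gamma) - 1) * (expi gamma - 1)
  + Ex P (fun w => kavg (T w) (fun k => (cnt (T w) d1 k)%:R))
     * (expi (- gamma) - 1) * ('C(n, d2))%:R
  + Ex P (fun w => kavg (T w) (fun k => (cnt (T w) d2 k)%:R))
     * (expi gamma - 1) * ('C(n, d1))%:R
  + ('C(n, d1))%:R * ('C(n, d2))%:R.

End QAOA.

From mathcomp Require Import all_boot all_order all_algebra.
From mathcomp.real_closed Require Import complex.
From mathcomp Require Import all_classical all_reals all_analysis.
From mathcomp Require Import ring.
Import Order.TTheory GRing.Theory Num.Theory.
Import numFieldNormedType.Exports.

(* In the Walsh-Hadamard basis of vectors z |-> (-1)^(s.z) the mixer X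
   is diagonal with real eigenvalues and the cost C is diagonal in the
   computational basis, so both exponentials are computed exactly from the
   power series of cos and sin.  Factorising over the qubits, the matrix
   element <z| e^(-i beta X) |y> is the product of cos beta over the bits
   where z and y agree and of -i sin beta where they differ, i.e.
   f_n(beta, d_H(z, y)).  Summing over y, the amplitude of |k> in
   |beta,gamma>_1 is 2^(-n/2) c_k(beta,gamma), hence
   F_1 = |T| / 2^n * avg_k |c_k|^2 for every instance.  The approximation
   error is therefore 2^(-n) Cov(|T|, avg_k |c_k|^2), which Cauchy-Schwarz
   bounds; the formula for E(avg_k |c_k|^2) is the expansion of |c_k|^2
   followed by linearity of the averages. *)

Set Implicit Arguments.
Unset Strict Implicit.
Unset Printing Implicit Defensive.

Local Open Scope ring_scope.

Section ImaginaryExponential.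
Variable R : realType.
Local Notation C := R[i].
Local Open Scope classical_set_scope.

Lemma expr_i_double m : ('i%C : C) ^+ m.*2 = (-1) ^+ m.
Proof. by rewrite -mul2n exprM sqr_i. Qed.

Lemma exp_series_i_term t k :
  (k`!%:R : C)^-1 * ('i%C * t%:C%C) ^+ k = Complex (cos_coeff t k) (sin_coeff t k).
Proof.
rewrite /cos_coeff /sin_coeff /= exprMn -rmorphXn -(rmorph_nat (real_complex R)) -fmorphV.
have -> : ('i%C : C) ^+ k =
    if odd k then ((-1) ^+ k./2)%:C%C * 'i%C else ((-1) ^+ k./2)%:C%C.
  rewrite -[in LHS](odd_double_half k) rmorphXn rmorphN rmorph1.
  by case: (odd k); rewrite ?add1n ?exprS expr_i_double // mulrC.
have half_pred : odd k -> k.-1./2 = k./2.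
  move=> ok; have -> : k = (k./2).*2.+1 by rewrite -{1}(odd_double_half k) ok.
  by rewrite /= half_double uphalf_double.
rewrite -!exprnP; case: (odd k) half_pred => /= half_pred.
  by rewrite half_pred //; apply/eqP; rewrite eq_complex /=; apply/andP; split; apply/eqP; ring.
by rewrite -!rmorphM; apply/eqP; rewrite eq_complex /=; apply/andP; split; apply/eqP; ring.
Qed.

Lemma exp_series_i_partial t N :
  \sum_(k < N) (k`!%:R : C)^-1 * ('i%C * t%:C%C) ^+ k =
  Complex (series (cos_coeff t) N) (series (sin_coeff t) N).
Proof.
elim: N => [|N IH]; first by rewrite big_ord0 /series /= !big_geq.
by rewrite big_ord_recr /= IH exp_series_i_term !seriesSr.
Qed.

Lemma cvg_series_cos_coeff (t : R) : series (cos_coeff t) N @[N --> \oo] --> cos t.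
Proof. by rewrite unlock; exact: is_cvg_series_cos_coeff. Qed.

Lemma cvg_series_sin_coeff (t : R) : series (sin_coeff t) N @[N --> \oo] --> sin t.
Proof. by rewrite unlock; exact: is_cvg_series_sin_coeff. Qed.

Lemma expi0 : expi (0 : R) = 1.
Proof. by rewrite /expi cos0 sin0. Qed.

Lemma expiD (x y : R) : expi (x + y) = expi x * expi y.
Proof. by apply/eqP; rewrite eq_complex /= cosD sinD; apply/andP; split; apply/eqP; ring. Qed.

Lemma expi_sum (I : finType) (f : I -> R) : expi (\sum_i f i) = \prod_i expi (f i).
Proof. exact: (big_morph _ expiD expi0). Qed.

Lemma expiNJ (t : R) : conjc (expi (- t)) = expi t.
Proof. by apply/eqP; rewrite eq_complex /= cosN sinN opprK !eqxx. Qed.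

Lemma sum_Complex (I : finType) (f g : I -> R) :
  \sum_i Complex (f i) (g i) = Complex (\sum_i f i) (\sum_i g i).
Proof. by elim/big_rec3: _ => // i x y z _ ->. Qed.

Lemma realC_mul_Complex (u v x y : R) :
  u%:C%C * Complex x y * v%:C%C = Complex (u * x * v) (u * y * v).
Proof. by apply/eqP; rewrite eq_complex /=; apply/andP; split; apply/eqP; ring. Qed.

End ImaginaryExponential.

Lemma conj_diag_mxE (R : pzSemiRingType) m (U V : 'M[R]_m) d a b :
  (U *m diag_mx d *m V) a b = \sum_s U a s * d 0 s * V s b.
Proof. by rewrite mxE; apply: eq_bigr => s _; rewrite mul_mx_diag mxE. Qed.

Lemma exprm_conj_diag (R : pzSemiRingType) m (U V : 'M[R]_m) d k :
  U *m V = 1%:M -> V *m U = 1%:M ->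
  (U *m diag_mx d *m V) ^+ k = U *m diag_mx (\row_s d 0 s ^+ k) *m V.
Proof.
move=> UV VU; elim: k => [|k IH].
  have -> : \row_s d 0 s ^+ 0 = const_mx 1 by apply/rowP => s; rewrite !mxE.
  by rewrite expr0 diag_const_mx mulmx1 UV.
rewrite exprSr IH -mulmxE !mulmxA -[_ *m V *m U]mulmxA VU mulmx1.
rewrite -[_ *m diag_mx _ *m diag_mx _]mulmxA mulmx_diag.
by congr (_ *m diag_mx _ *m _); apply/rowP => s; rewrite !mxE exprSr.
Qed.

Section MatrixExponential.
Variable R : realType.
Local Notation toC := (real_complex R).

Lemma expm_conj_diag m (U V : 'M[R]_m) (lam : 'I_m -> R) : V *m U = 1%:M ->
  expm (map_mx toC U *m diag_mx (\row_s ('i%C * (lam s)%:C%C)) *m map_mx toC V)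
  = map_mx toC U *m diag_mx (\row_s expi (lam s)) *m map_mx toC V.
Proof.
move=> VU; have UV : U *m V = 1%:M by apply: mulmx1C.
have [UV' VU'] : map_mx toC U *m map_mx toC V = 1%:M /\ map_mx toC V *m map_mx toC U = 1%:M.
  by rewrite -!map_mxM UV VU map_mx1.
have partialE N a b :
    expm_partial (map_mx toC U *m diag_mx (\row_s ('i%C * (lam s)%:C%C)) *m map_mx toC V) N a b
    = Complex (\sum_s U a s * series (cos_coeff (lam s)) N * V s b)
              (\sum_s U a s * series (sin_coeff (lam s)) N * V s b).
  rewrite /expm_partial summxE.
  under eq_bigr do rewrite exprm_conj_diag // mxE conj_diag_mxE mulr_sumr.
  rewrite exchange_big -sum_Complex; apply: eq_bigr => s _.
  rewrite -realC_mul_Complex -exp_series_i_partial mulr_sumr mulr_suml.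
  by apply: eq_bigr => k _; rewrite !mxE; ring.
apply/matrixP => a b; rewrite conj_diag_mxE.
under eq_bigr do rewrite !mxE realC_mul_Complex.
rewrite sum_Complex mxE.
congr Complex; apply: cvg_lim => //; under eq_fun do rewrite partialE /=;
  apply: (@cvg_big R _ +%R 0 predT add_continuous) => // s _; apply: cvgMr_tmp; apply: cvgMl_tmp.
- exact: cvg_series_cos_coeff.
- exact: cvg_series_sin_coeff.
Qed.

End MatrixExponential.

Lemma nat_binary_expansion {n a} :
  (a < 2 ^ n)%N -> a = (\sum_(j < n) odd (a %/ 2 ^ j) * 2 ^ j)%N.
Proof.
elim: n a => [|n IH] a ha; first by case: a ha => // ?; rewrite big_ord0.
rewrite big_ord_recl /= expn0 divn1 muln1.
have ha2 : (a %/ 2 < 2 ^ n)%N by rewrite ltn_divLR // -expnSr.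
under eq_bigr => j _ do rewrite /bump /= add1n expnS divnMA mulnCA.
by rewrite -big_distrr /= -IH // -[in LHS](odd_double_half a) divn2 -muln2 mulnC.
Qed.

Section Bits.
Context {n : nat}.
Local Notation bs := (bitstr n).

Lemma bits_inj : injective (@bits n).
Proof.
move=> a b eq_ab; apply: val_inj => /=.
rewrite (nat_binary_expansion (ltn_ord a)) (nat_binary_expansion (ltn_ord b)).
by apply: eq_bigr => j _; have := congr1 (fun f : bs => f j) eq_ab; rewrite !ffunE => ->.
Qed.

Lemma bits_bij : bijective (@bits n).
Proof. by apply: inj_card_bij; [exact: bits_inj | rewrite card_ffun card_bool !card_ord]. Qed.

Lemma sum_bits {V : nmodType} (F : bs -> V) : \sum_(a < 2 ^ n) F (bits a) = \sum_z F z.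
Proof. by rewrite [RHS](reindex (@bits n)) //; exact: onW_bij bits_bij. Qed.

Lemma flipK j : involutive (@flip n j).
Proof. by move=> z; apply/ffunP => i; rewrite !ffunE; case: eqP => // ->; rewrite negbK. Qed.

Lemma hamming_sym (x y : bs) : hamming x y = hamming y x.
Proof. by apply: eq_card => j; rewrite !inE eq_sym. Qed.

Lemma hamming_lt (x y : bs) : (hamming x y < n.+1)%N.
Proof. by rewrite ltnS; apply: leq_trans (max_card _) _; rewrite card_ord. Qed.

Lemma card_hamming_sphere (k : bs) d : #|[set z : bs | hamming z k == d]| = 'C(n, d).
Proof.
pose D (z : bs) := [set j | z j != k j].
pose E (S : {set 'I_n}) : bs := [ffun j => (j \in S) (+) k j].
have DK : cancel D E.
  by move=> z; apply/ffunP => j; rewrite ffunE inE; case: (z j); case: (k j).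
have EK : cancel E D.
  by move=> S; apply/setP => j; rewrite inE ffunE; case: (j \in S); case: (k j).
rewrite -[in RHS](card_ord n) -card_draws -!sum1_card (reindex D) /=; last by exists E.
by apply: eq_bigl => z; rewrite !inE.
Qed.

End Bits.

Section WalshHadamard.
Variable R : realType.
Local Notation C := R[i].
Local Notation toC := (real_complex R).
Variable n : nat.
Local Notation bs := (bitstr n).
Local Notation N := (2 ^ n)%N.

Definition sign (b : bool) : R := if b then -1 else 1.

Definition walsh (s z : bs) : R := \prod_(j < n) sign (s j && z j).

Definition walsh_eig (s : bs) : R := \sum_(j < n) sign (s j).

Lemma walsh_flip s z j : walsh s (flip j z) = sign (s j) * walsh s z.
Proof.
rewrite /walsh (bigD1 j) //= [in RHS](bigD1 j) //= mulrA; congr (_ * _).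
  by rewrite ffunE eqxx; case: (s j) (z j) => [] []; rewrite /sign /= ?mulN1r ?opprK ?mul1r.
by apply: eq_bigr => i /negPf neq_ij; rewrite ffunE neq_ij.
Qed.

Lemma sum_walsh_mul s t : \sum_z walsh s z * walsh t z = if s == t then N%:R else 0.
Proof.
under eq_bigr do rewrite -big_split /=.
rewrite -(bigA_distr_bigA (fun j (b : bool) => sign (s j && b) * sign (t j && b))) /=.
under eq_bigr do rewrite big_bool /= !andbT !andbF /= mulr1.
case: eqP => [<- | /eqP neq_st].
  have sign_sqr j : sign (s j) * sign (s j) + 1 = 2.
    by case: (s j); rewrite /sign ?mulrNN mulr1.
  by under eq_bigr do rewrite sign_sqr; rewrite prodr_const card_ord natrX.
have [j neq_j | eq_all] := pickP (fun j : 'I_n => s j != t j); last first.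
  by case/eqP: neq_st; apply/ffunP => j; apply/eqP; move/negbFE: (eq_all j).
have sign_opp : sign (s j) * sign (t j) + 1 = 0.
  by move: neq_j; rewrite /sign; case: (s j); case: (t j); rewrite //= ?mulr1 ?mul1r addNr.
by rewrite (bigD1 j) //= sign_opp mul0r.
Qed.

Definition walshU : 'M[R]_N := \matrix_(a, s) walsh (bits s) (bits a).

Definition walshV : 'M[R]_N := \matrix_(s, b) ((N%:R)^-1 * walsh (bits s) (bits b)).

Lemma walshVU : walshV *m walshU = 1%:M.
Proof.
apply/matrixP => s t; rewrite !mxE.
under eq_bigr do rewrite !mxE -mulrA.
rewrite -mulr_sumr (sum_bits (fun z => walsh (bits s) z * walsh (bits t) z)) sum_walsh_mul.
rewrite (inj_eq (@bits_inj n)); case: (s == t); last by rewrite mulr0.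
by rewrite mulVf // pnatr_eq0 -lt0n expn_gt0.
Qed.

Lemma sum_flip_indicator (F : bs -> C) j z0 : \sum_z (z0 == flip j z)%:R * F z = F (flip j z0).
Proof.
rewrite (bigD1 (flip j z0)) //= flipK eqxx mul1r big1 ?addr0 // => z neq_z.
by case: eqP => [eq_z|_]; [case/eqP: neq_z; rewrite eq_z flipK | rewrite mul0r].
Qed.

Lemma Xmix_walshU :
  Xmix R n *m map_mx toC walshU = map_mx toC walshU *m diag_mx (\row_s (walsh_eig (bits s))%:C%C).
Proof.
apply/matrixP => a s; rewrite mul_mx_diag !mxE.
under eq_bigr => b _ do rewrite /Xmix summxE !mxE mulr_suml.
rewrite exchange_big /=.
under eq_bigr => j _ do under eq_bigr => b _ do rewrite mxE.
under eq_bigr => j _ do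
  rewrite (sum_bits (fun z => (bits a == flip j z)%:R * (walsh (bits s) z)%:C%C))
          sum_flip_indicator walsh_flip.
by rewrite -rmorph_sum -rmorphM mulrC /walsh_eig mulr_suml.
Qed.

Lemma expm_Xmix (beta : R) : expm ((- 'i%C * beta%:C%C) *: Xmix R n) =
  map_mx toC walshU *m diag_mx (\row_s expi (- (beta * walsh_eig (bits s)))) *m map_mx toC walshV.
Proof.
rewrite -expm_conj_diag; last exact: walshVU.
have UV : map_mx toC walshU *m map_mx toC walshV = 1%:M.
  by apply: mulmx1C; rewrite -map_mxM walshVU map_mx1.
rewrite -[Xmix R n]mulmx1 -UV mulmxA Xmix_walshU; congr expm.
apply/matrixP => a b; rewrite mxE !conj_diag_mxE mulr_sumr.
by apply: eq_bigr => s _; rewrite !mxE rmorphN rmorphM /=; ring.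
Qed.

Lemma sum_bool_sign_expi (beta : R) (x y : bool) :
  \sum_(c : bool) toC (sign (c && x)) * expi (- (beta * sign c)) * toC (2^-1 * sign (c && y))
  = if x != y then - 'i%C * (sin beta)%:C%C else (cos beta)%:C%C.
Proof.
rewrite big_bool /sign /expi; case: x; case: y => /=;
  apply/eqP; rewrite eq_complex /= ?mulr1 ?mulrN1 ?opprK ?cosN ?sinN;
  by apply/andP; split; apply/eqP; field.
Qed.

Lemma prod_hamming_fn (beta : R) (x y : bs) :
  \prod_(j < n) (if x j != y j then - 'i%C * (sin beta)%:C%C else (cos beta)%:C%C)
  = fn n beta (hamming x y).
Proof.
rewrite (bigID (fun j => x j != y j)) /=.
under eq_bigr => j neq_j do rewrite neq_j.
under [X in _ * X]eq_bigr => j eq_j do rewrite (negbTE eq_j).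
rewrite !prodr_const /fn /hamming mulrC.
congr (_ ^+ _ * _ ^+ _); last by apply: eq_card => j; rewrite inE.
rewrite -[X in (X - _)%N](card_ord n) -(cardsC [set j | x j != y j]) addKn.
by apply: eq_card => j; rewrite !inE.
Qed.

Lemma expm_Xmix_entry (beta : R) a b :
  expm ((- 'i%C * beta%:C%C) *: Xmix R n) a b = fn n beta (hamming (bits a) (bits b)).
Proof.
rewrite expm_Xmix conj_diag_mxE.
under eq_bigr => s _ do rewrite !mxE.
set x := bits a; set y := bits b.
rewrite (sum_bits (fun z =>
  toC (walsh z x) * expi (- (beta * walsh_eig z)) * toC ((N%:R)^-1 * walsh z y))).
pose G j (c : bool) :=
  toC (sign (c && x j)) * expi (- (beta * sign c)) * toC (2^-1 * sign (c && y j)).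
have factor z : toC (walsh z x) * expi (- (beta * walsh_eig z)) * toC ((N%:R)^-1 * walsh z y)
    = \prod_j G j (z j).
  have -> : (N%:R : R)^-1 * walsh z y = \prod_j (2^-1 * sign (z j && y j)).
    by rewrite big_split /= prodr_const card_ord natrX exprVn.
  by rewrite /walsh /walsh_eig mulr_sumr -sumrN expi_sum !rmorph_prod -!big_split.
under eq_bigr do rewrite factor.
rewrite -(bigA_distr_bigA G) -prod_hamming_fn; apply: eq_bigr => j _.
exact: sum_bool_sign_expi.
Qed.

End WalshHadamard.

Lemma sum_ord_indicator {V : pzSemiRingType} {p m : nat} (g : nat -> V) :
  (m < p)%N -> \sum_(d < p) (m == d)%:R * g d = g m.
Proof.
move=> lt_mp; rewrite (bigD1 (Ordinal lt_mp)) //= eqxx mul1r big1 ?addr0 // => d neq_d.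
by case: eqP => [eq_md|_]; [case/eqP: neq_d; apply: val_inj | rewrite mul0r].
Qed.

Lemma natr_card_sum {V : pzSemiRingType} {T : finType} (A : {pred T}) :
  #|A|%:R = \sum_z (z \in A)%:R :> V.
Proof. by rewrite -sum1_card natr_sum big_mkcond; apply: eq_bigr => z _; case: (z \in A). Qed.

Section OneLayerState.
Variable R : realType.
Local Notation C := R[i].
Local Notation toC := (real_complex R).
Variable n : nat.
Local Notation bs := (bitstr n).
Local Notation N := (2 ^ n)%N.

Lemma Ccost_diag (T : {set bs}) : Ccost R T = diag_mx (\row_a ((bits a \in T)%:R : C)).
Proof. by apply/matrixP => a b; rewrite !mxE; case: (a == b); rewrite ?mulr1n ?mulr0n. Qed.

Lemma expm_Ccost (T : {set bs}) (gamma : R) : expm ((- 'i%C * gamma%:C%C) *: Ccost R T)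
  = diag_mx (\row_a expi (- (gamma * (bits a \in T)%:R))).
Proof.
have -> : (- 'i%C * gamma%:C%C) *: Ccost R T = map_mx toC 1%:M *m
    diag_mx (\row_a ('i%C * (- (gamma * (bits a \in T)%:R))%:C%C)) *m map_mx toC 1%:M.
  rewrite map_mx1 mul1mx mulmx1 Ccost_diag; apply/matrixP => a b; rewrite !mxE.
  case: eqP => [->|_]; last by rewrite !mulr0n mulr0.
  by rewrite !mulr1n rmorphN rmorphM rmorph_nat /=; ring.
by rewrite expm_conj_diag ?mulmx1 // map_mx1 mul1mx mulmx1.
Qed.

Lemma ckE (T : {set bs}) (beta gamma : R) (k : bs) :
  ck T beta gamma k = \sum_z fn n beta (hamming k z) * expi (- (gamma * (z \in T)%:R)).
Proof.
symmetry.
under eq_bigr => z _ do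
  rewrite hamming_sym -(sum_ord_indicator (fn n beta) (hamming_lt z k)) mulr_suml.
rewrite exchange_big /=; apply: eq_bigr => d _.
rewrite /cnt -(card_hamming_sphere k d) !natr_card_sum mulr_suml -big_split /= mulr_suml.
apply: eq_bigr => z _; rewrite !inE.
by case: (z \in T); case: (hamming z k == d);
  rewrite /= ?mulr1 ?mulr0 ?oppr0 ?expi0 ?mul0r ?mul1r ?add0r ?addr0; ring.
Qed.

Lemma psi1_entry (T : {set bs}) (beta gamma : R) a :
  psi1 T beta gamma a 0 = (sqrtC 2)^-1 ^+ n * ck T beta gamma (bits a).
Proof.
rewrite /psi1 expm_Ccost ckE -(sum_bits (fun z => fn n beta (hamming (bits a) z) * _)).
rewrite mxE mulr_sumr; apply: eq_bigr => b _.
by rewrite mul_mx_diag mxE expm_Xmix_entry !mxE mulrC.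
Qed.

Lemma sqr_norm_plus_amplitude : conjc ((sqrtC 2)^-1 ^+ n) * ((sqrtC 2)^-1 ^+ n) = (N%:R : C)^-1.
Proof.
have amp_real : ((sqrtC 2)^-1 ^+ n : C) \is Num.real.
  by apply: ger0_real; rewrite exprn_ge0 // invr_ge0 sqrtC_ge0 ler0n.
have -> : conjc ((sqrtC 2)^-1 ^+ n : C) = (sqrtC 2)^-1 ^+ n := conj_Creal amp_real.
by rewrite -exprMn -invfM -expr2 sqrtCK exprVn natrX.
Qed.

Lemma F1_sum_ck (T : {set bs}) (beta gamma : R) :
  F1 T beta gamma = (N%:R)^-1 * \sum_(k in T) `|ck T beta gamma k| ^+ 2.
Proof.
rewrite /F1 Ccost_diag mxE.
(* generalising psi1 keeps mxE from unfolding the matrix exponentials *)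
move: (psi1_entry T beta gamma); move: (psi1 T beta gamma) => psi psiE.
under eq_bigr => b _ do rewrite mul_mx_diag !mxE psiE.
rewrite (sum_bits (fun z => conjc ((sqrtC 2)^-1 ^+ n * ck T beta gamma z) * (z \in T)%:R
  * ((sqrtC 2)^-1 ^+ n * ck T beta gamma z))).
rewrite mulr_sumr [RHS]big_mkcond /=; apply: eq_bigr => z _.
case: (z \in T); last by rewrite mulr0 mul0r.
by rewrite -sqr_norm_plus_amplitude rmorphM sqr_normc mulr1; ring.
Qed.

End OneLayerState.

Section FiniteExpectation.
Variable R : realType.
Local Notation C := R[i].
Variables (Omega : finType) (P : Omega -> R).
Hypothesis P_ge0 : forall w, 0 <= P w.
Hypothesis P_sum1 : \sum_w P w = 1.

Lemma eq_Ex (X Y : Omega -> C) : X =1 Y -> Ex P X = Ex P Y.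
Proof. by move=> eq_XY; apply: eq_bigr => w _; rewrite eq_XY. Qed.

Lemma ExD (X Y : Omega -> C) : Ex P (fun w => X w + Y w) = Ex P X + Ex P Y.
Proof. by rewrite /Ex -big_split; apply: eq_bigr => w _; rewrite mulrDr. Qed.

Lemma ExB (X Y : Omega -> C) : Ex P (fun w => X w - Y w) = Ex P X - Ex P Y.
Proof. by rewrite /Ex -sumrB; apply: eq_bigr => w _; rewrite mulrBr. Qed.

Lemma Ex_mull (X : Omega -> C) c : Ex P (fun w => c * X w) = c * Ex P X.
Proof. by rewrite /Ex mulr_sumr; apply: eq_bigr => w _; rewrite mulrCA. Qed.

Lemma Ex_mulr (X : Omega -> C) c : Ex P (fun w => X w * c) = Ex P X * c.
Proof. by rewrite /Ex mulr_suml; apply: eq_bigr => w _; rewrite mulrA. Qed.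

Lemma Ex_sum (I : finType) (X : I -> Omega -> C) :
  Ex P (fun w => \sum_i X i w) = \sum_i Ex P (X i).
Proof. by rewrite /Ex exchange_big; apply: eq_bigr => w _; rewrite mulr_sumr. Qed.

Lemma Ex_cst c : Ex P (fun _ => c) = c.
Proof. by rewrite /Ex -mulr_suml -rmorph_sum P_sum1 mul1r. Qed.

Lemma Ex_real (X : Omega -> C) : (forall w, X w \is Num.real) -> Ex P X \is Num.real.
Proof. by move=> X_real; apply: rpred_sum => w _; rewrite rpredM // ger0_real ?ler0c. Qed.

Lemma Ex_centered_mul (X Y : Omega -> C) :
  Ex P (fun w => (X w - Ex P X) * (Y w - Ex P Y)) = Ex P (fun w => X w * Y w) - Ex P X * Ex P Y.
Proof.
have -> : (fun w => (X w - Ex P X) * (Y w - Ex P Y)) =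
    (fun w => X w * Y w - (X w * Ex P Y + (Ex P X * Y w - Ex P X * Ex P Y))).
  by apply: funext => w; ring.
by rewrite ExB ExD ExB Ex_mulr Ex_mull Ex_cst; ring.
Qed.

Lemma Ex_Cauchy_Schwarz (X Y : Omega -> C) :
  (forall w, X w \is Num.real) -> (forall w, Y w \is Num.real) ->
  `|Ex P (fun w => X w * Y w)| <= sqrtC (Ex P (fun w => X w ^+ 2) * Ex P (fun w => Y w ^+ 2)).
Proof.
move=> X_real Y_real.
set sXY := Ex P _; set sXX := Ex P _; set sYY := Ex P _.
have lagrange : \sum_w \sum_v (P w)%:C%C * (P v)%:C%C * (X w * Y v - X v * Y w) ^+ 2
    = 2 * (sXX * sYY - sXY ^+ 2).
  transitivity (\sum_w \sum_v (((P w)%:C%C * X w ^+ 2) * ((P v)%:C%C * Y v ^+ 2)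
      + ((P w)%:C%C * Y w ^+ 2) * ((P v)%:C%C * X v ^+ 2)
      - (((P w)%:C%C * (X w * Y w)) * ((P v)%:C%C * (X v * Y v))
         + ((P w)%:C%C * (X w * Y w)) * ((P v)%:C%C * (X v * Y v))))).
    by apply: eq_bigr => w _; apply: eq_bigr => v _; ring.
  have mul_sums (f g : Omega -> C) : \sum_w \sum_v f w * g v = (\sum_w f w) * (\sum_v g v).
    by rewrite big_distrlr.
  under eq_bigr => w _ do rewrite sumrB !big_split /=.
  by rewrite sumrB !big_split /= !mul_sums /sXX /sYY /sXY /Ex; ring.
have sXY_real : sXY \is Num.real by apply: Ex_real => w; rewrite rpredM.
have le_sXY : sXY ^+ 2 <= sXX * sYY.
  rewrite -subr_ge0 -(pmulr_rge0 _ (ltr0n _ 2)) -lagrange.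
  apply: sumr_ge0 => w _; apply: sumr_ge0 => v _.
  by apply: mulr_ge0; [rewrite mulr_ge0 ?ler0c | rewrite -realEsqr rpredB ?rpredM].
have sXY2_ge0 : 0 <= sXY ^+ 2 by rewrite -realEsqr.
by rewrite -(sqrCK (normr_ge0 sXY)) real_normK // ler_sqrtC ?nnegrE // (le_trans sXY2_ge0 le_sXY).
Qed.

Lemma cov_le_sqrt_Var (X Y : Omega -> C) :
  (forall w, X w \is Num.real) -> (forall w, Y w \is Num.real) ->
  `|Ex P (fun w => X w * Y w) - Ex P X * Ex P Y| <= sqrtC (Var P X * Var P Y).
Proof.
move=> X_real Y_real; rewrite -Ex_centered_mul.
by apply: Ex_Cauchy_Schwarz => w; rewrite rpredB ?Ex_real.
Qed.

End FiniteExpectation.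

Section TargetAverage.
Variable R : realType.
Local Notation C := R[i].
Variable n : nat.
Variable T : {set bitstr n}.
Hypothesis T_neq0 : T != finset.set0.

Lemma eq_kavg (f g : bitstr n -> C) : f =1 g -> kavg T f = kavg T g.
Proof. by move=> eq_fg; congr (_ * _); apply: eq_bigr => k _. Qed.

Lemma kavgD (f g : bitstr n -> C) : kavg T (fun k => f k + g k) = kavg T f + kavg T g.
Proof. by rewrite /kavg big_split mulrDr. Qed.

Lemma kavg_mulr (f : bitstr n -> C) c : kavg T (fun k => f k * c) = kavg T f * c.
Proof. by rewrite /kavg -mulr_suml mulrA. Qed.

Lemma kavg_sum (I : finType) (F : I -> bitstr n -> C) :
  kavg T (fun k => \sum_i F i k) = \sum_i kavg T (F i).
Proof. by rewrite /kavg exchange_big mulr_sumr. Qed.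

Lemma kavg_cst (c : C) : kavg T (fun _ => c) = c.
Proof.
have card_neq0 : (#|T|%:R : C) != 0 by rewrite pnatr_eq0 -lt0n card_gt0.
by rewrite /kavg sumr_const -[c *+ _]mulr_natl mulrA mulVf // mul1r.
Qed.

Lemma conjc_ck_term (c m : nat) (t : R) (f : C) :
  conjc ((c%:R * (expi (- t) - 1) + m%:R) * f) = (c%:R * (expi t - 1) + m%:R) * conjc f.
Proof.
rewrite rmorphM rmorphD rmorphM rmorphB !rmorph_nat rmorph1.
by congr ((_ * (_ - _) + _) * _); exact: expiNJ.
Qed.

Lemma sqr_norm_ck (beta gamma : R) k :
  `|ck T beta gamma k| ^+ 2 = \sum_(d1 < n.+1) \sum_(d2 < n.+1)
    ((cnt T d1 k)%:R * (expi (- gamma) - 1) + 'C(n, d1)%:R) *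
    ((cnt T d2 k)%:R * (expi gamma - 1) + 'C(n, d2)%:R) *
    (fn n beta d1 * conjc (fn n beta d2)).
Proof.
rewrite sqr_normc /ck (big_morph conjc (rmorphD _) (rmorph0 _)) mulr_suml.
apply: eq_bigr => d1 _.
rewrite mulr_sumr; apply: eq_bigr => d2 _.
by rewrite conjc_ck_term; ring.
Qed.

Lemma kavg_sqr_norm_ck (beta gamma : R) :
  kavg T (fun k => `|ck T beta gamma k| ^+ 2) = \sum_(d1 < n.+1) \sum_(d2 < n.+1)
    (kavg T (fun k => (cnt T d1 k * cnt T d2 k)%:R) * (expi (- gamma) - 1) * (expi gamma - 1)
     + kavg T (fun k => (cnt T d1 k)%:R) * (expi (- gamma) - 1) * 'C(n, d2)%:R
     + kavg T (fun k => (cnt T d2 k)%:R) * (expi gamma - 1) * 'C(n, d1)%:R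
     + 'C(n, d1)%:R * 'C(n, d2)%:R) * fn n beta d1 * conjc (fn n beta d2).
Proof.
under eq_kavg do rewrite sqr_norm_ck.
rewrite kavg_sum; apply: eq_bigr => d1 _; rewrite kavg_sum; apply: eq_bigr => d2 _.
rewrite kavg_mulr -mulrA; congr (_ * _).
transitivity (kavg T (fun k =>
    (cnt T d1 k * cnt T d2 k)%:R * ((expi (- gamma) - 1) * (expi gamma - 1))
  + (cnt T d1 k)%:R * ((expi (- gamma) - 1) * 'C(n, d2)%:R)
  + (cnt T d2 k)%:R * ((expi gamma - 1) * 'C(n, d1)%:R)
  + 'C(n, d1)%:R * 'C(n, d2)%:R)).
  by apply: eq_kavg => k; rewrite natrM; ring.
by rewrite !kavgD !kavg_mulr kavg_cst !mulrA.
Qed.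

Lemma F1_kavg (beta gamma : R) :
  F1 T beta gamma = ((2 ^ n)%:R)^-1 * (#|T|%:R * kavg T (fun k => `|ck T beta gamma k| ^+ 2)).
Proof. by rewrite F1_sum_ck /kavg mulVKf // pnatr_eq0 -lt0n card_gt0. Qed.

End TargetAverage.

Theorem theorem1 (R : realType) (n : nat) (Omega : finType) (P : Omega -> R)
  (T : Omega -> {set {ffun 'I_n -> bool}})
  (P_ge0 : forall w, 0 <= P w) (P_sum1 : \sum_(w : Omega) P w = 1)
  (T_nonempty : forall w, T w != finset.set0) (beta gamma : R) :
  Ex P (avg_ck2 T beta gamma) =
    \sum_(d1 < n.+1) \sum_(d2 < n.+1)
       wcoef P T gamma d1 d2 * fn n beta d1 * conjc (fn n beta d2)
  /\
  `| Ex P (fun w => F1 (T w) beta gamma) - EtildeF1 P T beta gamma |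
    <= sqrtC (Var P (fun w => (#|T w|)%:R) * Var P (avg_ck2 T beta gamma)).
Proof.
split.
  rewrite /avg_ck2; under eq_Ex => w do rewrite (kavg_sqr_norm_ck (T_nonempty w)).
  rewrite Ex_sum; apply: eq_bigr => d1 _; rewrite Ex_sum; apply: eq_bigr => d2 _.
  by rewrite !Ex_mulr !ExD !Ex_mulr Ex_cst.
set X := fun w => (#|T w|)%:R : R[i].
set Y := avg_ck2 T beta gamma.
have X_real w : X w \is Num.real by rewrite realn.
have Y_real w : Y w \is Num.real.
  by rewrite rpredM ?rpredV ?realn // rpred_sum // => k _; rewrite rpredX ?normr_real.
under eq_Ex => w do rewrite (F1_kavg (T_nonempty w)).
rewrite Ex_mull /EtildeF1 -/X -/Y.
have -> : ((2 ^ n)%:R)^-1 * Ex P (fun w => X w * Y w) - Ex P X / (2 ^ n)%:R * Ex P Y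
    = ((2 ^ n)%:R)^-1 * (Ex P (fun w => X w * Y w) - Ex P X * Ex P Y) by ring.
apply: le_trans (cov_le_sqrt_Var P_ge0 P_sum1 X_real Y_real).
rewrite normrM ger0_norm ?invr_ge0 ?ler0n // ler_piMl ?normr_ge0 //.
by rewrite invf_le1 ?ltr0n ?expn_gt0 // ler1n expn_gt0.
Qed.
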